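(* For integers $t,n$, if $n<-|t-3|$ then $M_{t,n}=0$.
   Context: Let $\mathbb{N}$ be the positive integers. $M'_{t,n}$ is the cardinality of the union of the two sets $A=\{(u,v,w,k)\in\mathbb{N}^3\times\{0,1\}: u\neq w,\ v\geq 2,\ n=u+w-v-1+6k,\ (-1)^kt=2+(u+w)(1+v)+uvw\}$ and $B=\{(u,v,w,k)\in\mathbb{N}^3\times\{1,2\}: u,v,w \text{ distinct},\ n=u+v+w-3+6k,\ (-1)^kt=1+u+v+w+u(1+v)+v(1+w)+w(1+u)+(1+u)(1+v)(1+w)\}$. Define $M_{t,n}=M'_{t,n}+1$ if $t\notin\{1,3\}$ and $n\in\{t-3,-(t-3)\}$; also $M_{t,n}=M'_{t,n}+1$ if $t=1$ and $n=\pm2$, or if $t=3$ and $n=0$; and $M_{t,n}=M'_{t,n}$ otherwise. *)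

From Stdlib Require Import ZArith List Lia Bool.
Import ListNotations.
Open Scope Z_scope.

Definition inA (t n u v w k : Z) : bool :=
  (1 <=? u) && (2 <=? v) && (1 <=? w) && negb (u =? w)
  && ((k =? 0) || (k =? 1))
  && (n =? u + w - v - 1 + 6 * k)
  && ((-1) ^ k * t =? 2 + (u + w) * (1 + v) + u * v * w).

Definition inB (t n u v w k : Z) : bool :=
  (1 <=? u) && (1 <=? v) && (1 <=? w)
  && negb (u =? v) && negb (v =? w) && negb (u =? w)
  && ((k =? 1) || (k =? 2))
  && (n =? u + v + w - 3 + 6 * k)
  && ((-1) ^ k * t =? 1 + u + v + w + u * (1 + v) + v * (1 + w) + w * (1 + u)
                      + (1 + u) * (1 + v) * (1 + w)).

Definition inAB (t n : Z) (x : Z * Z * Z * Z) : bool :=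
  let '(u, v, w, k) := x in inA t n u v w k || inB t n u v w k.

Definition range1 (b : Z) : list Z := map (fun i => Z.of_nat i + 1) (seq 0 (Z.to_nat b)).

(* the finite box [1,b]^3 x {0,1,2}, which contains every element of A u B
   (see [inAB_in_box] below, with b = |t|) *)
Definition box (b : Z) : list (Z * Z * Z * Z) :=
  list_prod (list_prod (list_prod (range1 b) (range1 b)) (range1 b)) [0; 1; 2].

Definition Mprime (t n : Z) : nat := length (filter (inAB t n) (box (Z.abs t))).

Definition M (t n : Z) : nat :=
  if (negb ((t =? 1) || (t =? 3))) && ((n =? t - 3) || (n =? - (t - 3))) then (Mprime t n + 1)%nat
  else if (t =? 1) && ((n =? 2) || (n =? -2)) then (Mprime t n + 1)%nat
  else if (t =? 3) && (n =? 0) then (Mprime t n + 1)%nat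
  else Mprime t n.

Lemma range1_spec b i : In i (range1 b) <-> 1 <= i <= b.
Proof.
  unfold range1; rewrite in_map_iff; split.
  - intros [j [<- Hj]]; apply in_seq in Hj; lia.
  - intros H; exists (Z.to_nat (i - 1)); split; [lia|]; apply in_seq; lia.
Qed.

Lemma inAB_in_box t n x : inAB t n x = true -> In x (box (Z.abs t)).
Proof.
  destruct x as [[[u v] w] k]; unfold inAB, inA, inB, box; intros H.
  rewrite !in_prod_iff, !range1_spec.
  apply orb_true_iff in H; destruct H as [H|H];
  repeat match goal with
  | H : (_ && _) = true |- _ => apply andb_true_iff in H; destruct H
  | H : (_ || _) = true |- _ => apply orb_true_iff in H
  | H : (_ <=? _) = true |- _ => apply Z.leb_le in H
  | H : (_ =? _) = true |- _ => apply Z.eqb_eq in H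
  | H : negb (_ =? _) = true |- _ => apply negb_true_iff, Z.eqb_neq in H
  | H : _ \/ _ |- _ => destruct H as [H|H]
  end;
  subst;
  repeat match goal with H : context [(-1) ^ ?k] |- _ =>
    let c := eval compute in ((-1) ^ k) in change ((-1) ^ k) with c in H end;
  assert (0 <= u * v) by nia; assert (0 <= u * v * w) by nia;
  assert (0 <= (1 + u) * (1 + v)) by nia; assert (0 <= (1 + u) * (1 + v) * (1 + w)) by nia;
  assert (0 <= (u + w) * (1 + v)) by nia; assert (0 <= u * (1 + v)) by nia;
  assert (0 <= v * (1 + w)) by nia; assert (0 <= w * (1 + u)) by nia;
  destruct (Z.abs_spec t) as [[? E]|[? E]]; rewrite E; repeat split; first [nia | simpl; tauto].
Qed.

(* Every element of A forces n >= -|t-3|: according to the sign (-1)^k,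
   t-3 or 3-t is at least (u+w)(1+v) + uvw - 1 > v - 1, which absorbs the
   negative part -v-1 of n.  Every element of B has n >= 6.  The four
   corrections turning M' into M all occur at some n >= -|t-3|. *)
From Stdlib Require Import ZArith List Lia Bool.
Open Scope Z_scope.

Lemma inA_n_ge (t n u v w k : Z) : inA t n u v w k = true -> - Z.abs (t - 3) <= n.
Proof.
  unfold inA; rewrite !andb_true_iff, orb_true_iff, !Z.leb_le, !Z.eqb_eq.
  intros [[[[[[Hu Hv] Hw] _] Hk] Hn] Ht].
  assert (Huvw : 0 <= u * v * w) by (apply Z.mul_nonneg_nonneg; nia).
  assert (Hdom : v < (u + w) * (1 + v)) by nia.
  pose proof (Z.abs_max (t - 3)) as Habs.
  destruct Hk as [-> | ->]; [rewrite Z.pow_0_r in Ht | rewrite Z.pow_1_r in Ht]; lia.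
Qed.

Lemma inB_n_pos (t n u v w k : Z) : inB t n u v w k = true -> 0 < n.
Proof.
  unfold inB; rewrite !andb_true_iff, orb_true_iff, !Z.leb_le, !Z.eqb_eq.
  intros [[[[[[[[Hu Hv] Hw] _] _] _] Hk] Hn] _]; lia.
Qed.

Lemma inAB_n_ge (t n : Z) (x : Z * Z * Z * Z) :
  inAB t n x = true -> - Z.abs (t - 3) <= n.
Proof.
  destruct x as [[[u v] w] k]; cbn; rewrite orb_true_iff.
  intros [HA | HB].
  - exact (inA_n_ge _ _ _ _ _ _ HA).
  - pose proof (inB_n_pos _ _ _ _ _ _ HB); lia.
Qed.

Lemma Mprime_eq0 (t n : Z) : n < - Z.abs (t - 3) -> Mprime t n = 0%nat.
Proof.
  intros Hn; unfold Mprime.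
  rewrite (filter_ext_in _ (fun _ => false)), filter_false; [reflexivity |].
  intros x _; destruct (inAB t n x) eqn:Hx; [pose proof (inAB_n_ge _ _ _ Hx); lia | reflexivity].
Qed.

Lemma M_eq_Mprime (t n : Z) : n < - Z.abs (t - 3) -> M t n = Mprime t n.
Proof.
  intros Hn; pose proof (Z.abs_max (t - 3)) as Habs; unfold M.
  repeat match goal with |- context [?a =? ?b] => destruct (Z.eqb_spec a b) end;
  cbn; lia.
Qed.

Theorem proposition4p2 (t n : Z) : n < - Z.abs (t - 3) -> M t n = 0%nat.
Proof.
  intros Hn; rewrite M_eq_Mprime by exact Hn; exact (Mprime_eq0 t n Hn).
Qed.
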